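(* Let $\alpha>0$ and $\Delta=\sqrt{1+\alpha^2}$. Let $\gamma_1(\theta)=(\cos\theta,\sin\theta,0)$ be the unit circle and $\gamma_2(\phi)=(\alpha\cos\phi+\Delta,0,\alpha\sin\phi)$ the circle of radius $\alpha$ in the $xz$-plane centered at $(\Delta,0,0)$. Then their Möbius cross-energy equals $4\pi^2$, i.e. $$2\int_0^{2\pi}\!\!\int_0^{2\pi}\frac{\alpha\,d\theta\,d\phi}{\left(\alpha\cos\theta+\sqrt{1+\alpha^2}-\cos\phi\right)^2+\sin^2\phi+\alpha^2\sin^2\theta}=4\pi^2 .$$
   Context: The Möbius cross-energy of two disjoint closed curves $\gamma_i,\gamma_j$ in $\mathbb R^3$ is taken with the convention that each pair of line elements is counted twice: $E_c=2\int\int \frac{|\dot\gamma_i(u)||\dot\gamma_j(v)|}{|\gamma_i(u)-\gamma_j(v)|^2}\,du\,dv$. *)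

From Stdlib Require Import Reals.
From Coquelicot Require Import Coquelicot.
Open Scope R_scope.

Definition pt3 := (R * R * R)%type.

Definition px (p : pt3) : R := fst (fst p).
Definition py (p : pt3) : R := snd (fst p).
Definition pz (p : pt3) : R := snd p.

Definition norm3 (p : pt3) : R := sqrt (px p ^ 2 + py p ^ 2 + pz p ^ 2).
Definition sub3 (p q : pt3) : pt3 :=
  (px p - px q, py p - py q, pz p - pz q).

Definition speed (g : R -> pt3) (t : R) : R :=
  norm3 (Derive (fun s => px (g s)) t,
         Derive (fun s => py (g s)) t,
         Derive (fun s => pz (g s)) t).

(* Moebius cross-energy of two closed curves parametrized over [0, 2*PI],
   with the convention that each pair of line elements is counted twice:
   E_c = 2 * int int |g1'(u)| |g2'(v)| / |g1(u) - g2(v)|^2 du dv. *)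
Definition cross_energy (g1 g2 : R -> pt3) : R :=
  2 * RInt (fun u =>
        RInt (fun v => speed g1 u * speed g2 v / (norm3 (sub3 (g1 u) (g2 v))) ^ 2)
             0 (2 * PI))
      0 (2 * PI).

Definition gamma1 (theta : R) : pt3 := (cos theta, sin theta, 0).
Definition gamma2 (alpha : R) (phi : R) : pt3 :=
  (alpha * cos phi + sqrt (1 + alpha ^ 2), 0, alpha * sin phi).

(** The squared distance between the two circles factors as
    [2 (Δ - cos θ) (Δ + α cos φ)], so the double integral splits into the
    product of two integrals [∫ dx / (a + b cos x) = 2π / sqrt (a² - b²)],
    equal to [2π/α] and [2π]; the factor [α] from the speed of [γ2] cancels. *)

From Stdlib Require Import Reals Lra Psatz.
From Coquelicot Require Import Coquelicot.
Open Scope R_scope.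

Lemma cos_combination_pos (a b x : R) : 0 < a + b -> 0 < a - b -> 0 < a + b * cos x.
Proof. intros Hp Hm. pose proof (COS_bound x). destruct (Rle_dec 0 b); nra. Qed.

(* Equal to [2 atan (k tan (x/2))], [k = s / (a + b)], away from the odd
   multiples of [π] (Weierstrass substitution), but smooth on all of [R]. *)
Definition inv_cos_primitive (a b s x : R) : R :=
  x + 2 * atan ((s - (a + b)) * sin x / ((a + b + s) + (a + b - s) * cos x)).

Lemma is_derive_inv_cos_primitive (a b s x : R) :
  0 < s -> s ^ 2 = a ^ 2 - b ^ 2 -> 0 < a + b -> 0 < a - b ->
  is_derive (inv_cos_primitive a b s) x (s / (a + b * cos x)).
Proof.
intros Hs Hs2 Hp Hm.
pose proof (cos_combination_pos (a + b + s) (a + b - s) x ltac:(lra) ltac:(lra)) as HM.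
pose proof (cos_combination_pos a b x Hp Hm) as HD.
unfold inv_cos_primitive; auto_derive; [lra|].
set (c := cos x) in *; set (t := sin x) in *.
set (M := a + b + s + (a + b - s) * c) in *.
assert (Ht : t * t = 1 - c * c) by (unfold t, c; rewrite <- (sin2_cos2 x); unfold Rsqr; ring).
assert (Hdenom : M * M + (s - (a + b)) ^ 2 * (1 - c * c) = 4 * (a + b) * (a + b * c)).
{ apply Rminus_diag_uniq.
  transitivity (2 * (1 - c) * (s ^ 2 - (a ^ 2 - b ^ 2))); [unfold M; ring | rewrite Hs2; ring]. }
assert (Hnumer : (s - (a + b)) * (c * M + (a + b - s) * (1 - c * c)) = 2 * (a + b) * (s - (a + b * c))).
{ apply Rminus_diag_uniq.
  transitivity ((c - 1) * (s ^ 2 - (a ^ 2 - b ^ 2))); [unfold M; ring | rewrite Hs2; ring]. }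
replace (1 + (s - (a + b)) * t * / M * ((s - (a + b)) * t * / M * 1))
  with ((M * M + (s - (a + b)) ^ 2 * (t * t)) / (M * M)) by (field; lra).
replace ((s - (a + b)) * (1 * c) * / M + (s - (a + b)) * t * (- ((a + b - s) * (1 * - t)) * / (M * M)))
  with ((s - (a + b)) * (c * M + (a + b - s) * (t * t)) / (M * M)) by (field; lra).
rewrite Ht, Hnumer, Hdenom. field. lra.
Qed.

Lemma is_RInt_inv_cos_combination (a b s : R) :
  0 < s -> s ^ 2 = a ^ 2 - b ^ 2 -> 0 < a + b -> 0 < a - b ->
  is_RInt (fun x => / (a + b * cos x)) 0 (2 * PI) (2 * PI / s).
Proof.
intros Hs Hs2 Hp Hm.
assert (Hperiod : minus (inv_cos_primitive a b s (2 * PI)) (inv_cos_primitive a b s 0) = 2 * PI).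
{ unfold inv_cos_primitive, minus, plus, opp; simpl.
  rewrite sin_2PI, sin_0, !Rmult_0_r, !Rdiv_0_l, atan_0. ring. }
assert (Hderiv : is_RInt (fun x => s / (a + b * cos x)) 0 (2 * PI) (2 * PI)).
{ rewrite <- Hperiod at 2. apply (is_RInt_derive (inv_cos_primitive a b s)).
  - intros x _. now apply is_derive_inv_cos_primitive.
  - intros x _. apply (ex_derive_continuous (K := R_AbsRing) (V := R_NormedModule)).
    pose proof (cos_combination_pos a b x Hp Hm). auto_derive. lra. }
apply (is_RInt_ext (fun x => scal (/ s) (s / (a + b * cos x)))).
- intros x _. pose proof (cos_combination_pos a b x Hp Hm).
  unfold scal; simpl; unfold mult; simpl. field. lra.
- replace (2 * PI / s) with (scal (/ s) (2 * PI)) by (unfold scal; simpl; unfold mult; simpl; field; lra).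
  exact (is_RInt_scal _ _ _ _ _ Hderiv).
Qed.

Lemma RInt_RInt_separable (F : R -> R -> R) (c : R) (f g : R -> R) (a b : R) :
  ex_RInt f a b -> ex_RInt g a b -> (forall u v, F u v = c * f u * g v) ->
  RInt (fun u => RInt (F u) a b) a b = c * RInt f a b * RInt g a b.
Proof.
intros Hf Hg HF.
rewrite (RInt_ext _ (fun u => scal (c * RInt g a b) (f u))).
- rewrite (RInt_scal f) by exact Hf. unfold scal; simpl; unfold mult; simpl. ring.
- intros u _. rewrite (RInt_ext _ (fun v => scal (c * f u) (g v))).
  + rewrite (RInt_scal g) by exact Hg. unfold scal; simpl; unfold mult; simpl. ring.
  + intros v _. rewrite HF. unfold scal; simpl; unfold mult; simpl. ring.
Qed.

Lemma speed_gamma1 (u : R) : speed gamma1 u = 1.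
Proof.
unfold speed, norm3, gamma1, px, py, pz; cbn [fst snd].
replace (Derive (fun s => cos s) u) with (- sin u)
  by (symmetry; apply is_derive_unique; auto_derive; auto; ring).
replace (Derive (fun s => sin s) u) with (cos u)
  by (symmetry; apply is_derive_unique; auto_derive; auto; ring).
rewrite Derive_const.
replace ((- sin u) ^ 2 + cos u ^ 2 + 0 ^ 2) with 1 by (rewrite <- (sin2_cos2 u); unfold Rsqr; ring).
apply sqrt_1.
Qed.

Lemma speed_gamma2 (alpha v : R) : 0 <= alpha -> speed (gamma2 alpha) v = alpha.
Proof.
intros Ha.
unfold speed, norm3, gamma2, px, py, pz; cbn [fst snd].
replace (Derive (fun s => alpha * cos s + sqrt (1 + alpha ^ 2)) v) with (- alpha * sin v)
  by (symmetry; apply is_derive_unique; auto_derive; auto; ring).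
replace (Derive (fun s => alpha * sin s) v) with (alpha * cos v)
  by (symmetry; apply is_derive_unique; auto_derive; auto; ring).
rewrite Derive_const.
replace ((- alpha * sin v) ^ 2 + 0 ^ 2 + (alpha * cos v) ^ 2) with (alpha ^ 2)
  by (rewrite <- (Rmult_1_r (alpha ^ 2)), <- (sin2_cos2 v); unfold Rsqr; ring).
now apply sqrt_pow2.
Qed.

Lemma circles_gap_factor (alpha D u v : R) : D ^ 2 = 1 + alpha ^ 2 ->
  (alpha * cos v + D - cos u) ^ 2 + sin u ^ 2 + alpha ^ 2 * sin v ^ 2
  = 2 * (D - cos u) * (D + alpha * cos v).
Proof.
intros HD.
pose proof (sin2_cos2 u) as Hu. pose proof (sin2_cos2 v) as Hv. unfold Rsqr in Hu, Hv.
apply Rminus_diag_uniq.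
transitivity ((sin u * sin u + cos u * cos u - 1) + alpha ^ 2 * (sin v * sin v + cos v * cos v - 1)
              + (1 + alpha ^ 2 - D ^ 2)); [ring | rewrite Hu, Hv, HD; ring].
Qed.

Lemma norm3_sub_gamma1_gamma2_sqr (alpha u v : R) :
  norm3 (sub3 (gamma1 u) (gamma2 alpha v)) ^ 2
  = 2 * (sqrt (1 + alpha ^ 2) - cos u) * (sqrt (1 + alpha ^ 2) + alpha * cos v).
Proof.
unfold norm3, sub3, gamma1, gamma2, px, py, pz; cbn [fst snd].
rewrite pow2_sqrt by (repeat apply Rplus_le_le_0_compat; apply pow2_ge_0).
rewrite <- circles_gap_factor by (apply pow2_sqrt; pose proof (pow2_ge_0 alpha); lra).
ring.
Qed.

Theorem mainTheorem2 (alpha : R) (Halpha : 0 < alpha) :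
  cross_energy gamma1 (gamma2 alpha) = 4 * PI ^ 2 /\
  2 * RInt (fun theta =>
         RInt (fun phi =>
           alpha / ((alpha * cos theta + sqrt (1 + alpha ^ 2) - cos phi) ^ 2
                    + sin phi ^ 2 + alpha ^ 2 * sin theta ^ 2))
           0 (2 * PI))
       0 (2 * PI) = 4 * PI ^ 2.
Proof.
set (D := sqrt (1 + alpha ^ 2)).
assert (HD : D ^ 2 = 1 + alpha ^ 2) by (apply pow2_sqrt; pose proof (pow2_ge_0 alpha); lra).
assert (HD0 : 0 <= D) by apply sqrt_pos.
assert (HD1 : 1 < D) by nra.
assert (HDalpha : alpha < D) by nra.
assert (J1 : is_RInt (fun x => / (D - cos x)) 0 (2 * PI) (2 * PI / alpha)).
{ apply (is_RInt_ext (fun x => / (D + -1 * cos x))); [intros; f_equal; ring |].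
  apply is_RInt_inv_cos_combination; lra. }
assert (J2 : is_RInt (fun x => / (D + alpha * cos x)) 0 (2 * PI) (2 * PI / 1)).
{ apply is_RInt_inv_cos_combination; lra. }
assert (Hu : forall u, 0 < D - cos u) by (intros u; pose proof (COS_bound u); lra).
assert (Hv : forall v, 0 < D + alpha * cos v)
  by (intros v; apply (cos_combination_pos D alpha v); lra).
split.
- unfold cross_energy.
  rewrite (RInt_RInt_separable _ (alpha / 2) _ _ _ _ (ex_intro _ _ J1) (ex_intro _ _ J2)).
  + rewrite (is_RInt_unique _ _ _ _ J1), (is_RInt_unique _ _ _ _ J2). field. lra.
  + intros u v; cbv beta. rewrite speed_gamma1, speed_gamma2, norm3_sub_gamma1_gamma2_sqr by lra.
    fold D. specialize (Hu u). specialize (Hv v). field. lra.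
- rewrite (RInt_RInt_separable _ (alpha / 2) _ _ _ _ (ex_intro _ _ J2) (ex_intro _ _ J1)).
  + rewrite (is_RInt_unique _ _ _ _ J1), (is_RInt_unique _ _ _ _ J2). field. lra.
  + intros t p; cbv beta. rewrite circles_gap_factor by exact HD.
    specialize (Hu p). specialize (Hv t). field. lra.
Qed.
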